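(* The problem SPInv is reducible to the problem Prob-SPInv: there is an algorithm which, given access to an oracle solving Prob-SPInv, solves SPInv.
   Context: A deterministic unguarded loop with polynomial updates over variables $x_1,\dots,x_k$ is given by an initial vector $v\in\mathbb{Q}^k$ and an update map $F=(f_1,\dots,f_k)$, $f_j\in\mathbb{Q}[x_1,\dots,x_k]$; its classical invariant ideal is $\{p\in\overline{\mathbb{Q}}[x_1,\dots,x_k]: p(F^n(v))=0\ \forall n\in\mathbb{N}_0\}$ ($\overline{\mathbb{Q}}$ the algebraic numbers). SPInv: given such a loop, compute a finite basis of its classical invariant ideal. An unguarded probabilistic loop with polynomial updates and without nondeterministic choice over $x_1,\dots,x_k$ consists of an initial vector in $\mathbb{Q}^k$ and finitely many transitions, each with a probability in $(0,1]$ (summing to $1$) and a polynomial update map with rational coefficients; each iteration applies one transition chosen at random with its probability. For a monomial $M$, $\mathbb{E}[M_n]$ is the expected value of $M$ after $n$ loop iterations. The moment invariant ideal of order $1$ is $\mathbb{I}^{\le1}=\{p\in\overline{\mathbb{Q}}[\mathbb{E}[x_1],\dots,\mathbb{E}[x_k]]: p(\mathbb{E}[(x_1)_n],\dots,\mathbb{E}[(x_k)_n])=0\ \forall n\in\mathbb{N}_0\}$, where $\mathbb{E}[x_1],\dots,\mathbb{E}[x_k]$ are formal variables. Prob-SPInv: given such a probabilistic loop, compute a finite basis of $\mathbb{I}^{\le1}$. A deterministic loop is in particular such a probabilistic loop with a single transition of probability $1$. *)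

From HB Require Import structures.
From mathcomp Require Import all_boot all_order all_algebra all_field.
From mathcomp Require Import mpoly.
Set Implicit Arguments. Unset Strict Implicit. Unset Printing Implicit Defensive.
Import Order.TTheory GRing.Theory Num.Theory.
Local Open Scope ring_scope.

Definition upd_map (k : nat) := 'I_k -> {mpoly rat[k]}.

Definition apply_upd (k : nat) (F : upd_map k) (s : 'I_k -> rat) : 'I_k -> rat :=
  fun i => (F i).@[s].

Record DetLoop (k : nat) := MkDetLoop { dinit : 'I_k -> rat; dupd : upd_map k }.

Definition det_state (k : nat) (L : DetLoop k) (n : nat) : 'I_k -> rat :=
  iter n (apply_upd (dupd L)) (dinit L).

Definition classical_inv_ideal (k : nat) (L : DetLoop k) (p : {mpoly algC[k]}) : Prop :=
  forall n : nat, p.@[fun i => ratr (det_state L n i)] = 0.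

Record ProbLoop (k : nat) :=
  MkProbLoop { pinit : 'I_k -> rat; ptrans : seq (rat * upd_map k) }.

Definition prob_valid (k : nat) (L : ProbLoop k) : Prop :=
  [/\ (0 < size (ptrans L))%N,
      all (fun t => (0 < t.1) && (t.1 <= 1)) (ptrans L)
    & \sum_(t <- ptrans L) t.1 = 1].

(* Finite distribution over states: list of (weight, state). *)
Definition dist_step (k : nat) (T : seq (rat * upd_map k))
  (D : seq (rat * ('I_k -> rat))) : seq (rat * ('I_k -> rat)) :=
  flatten [seq [seq (ws.1 * t.1, apply_upd t.2 ws.2) | t <- T] | ws <- D].

Definition dist (k : nat) (L : ProbLoop k) (n : nat) : seq (rat * ('I_k -> rat)) :=
  iter n (dist_step (ptrans L)) [:: (1, pinit L)].

Definition expect (k : nat) (L : ProbLoop k) (n : nat) (i : 'I_k) : rat :=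
  \sum_(ws <- dist L n) ws.1 * ws.2 i.

(* Moment invariant ideal of order 1; the variable with index i of the
   polynomial ring stands for the formal variable E[x_i]. *)
Definition moment_ideal1 (k : nat) (L : ProbLoop k) (p : {mpoly algC[k]}) : Prop :=
  forall n : nat, p.@[fun i => ratr (expect L n i)] = 0.

Definition in_ideal_gen (k : nat) (B : seq {mpoly algC[k]}) (p : {mpoly algC[k]}) : Prop :=
  exists cs : seq {mpoly algC[k]}, p = \sum_(j < size B) cs`_j * B`_j.

Definition is_finite_basis (k : nat) (B : seq {mpoly algC[k]})
  (I : {mpoly algC[k]} -> Prop) : Prop :=
  forall p, I p <-> in_ideal_gen B p.

Definition solves_ProbSPInv
  (O : forall k : nat, ProbLoop k -> seq {mpoly algC[k]}) : Prop :=
  forall (k : nat) (L : ProbLoop k), prob_valid L -> is_finite_basis (O k L) (moment_ideal1 L).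

Definition solves_SPInv
  (S : forall k : nat, DetLoop k -> seq {mpoly algC[k]}) : Prop :=
  forall (k : nat) (L : DetLoop k), is_finite_basis (S k L) (classical_inv_ideal L).

Definition det_as_prob (k : nat) (L : DetLoop k) : ProbLoop k :=
  MkProbLoop (dinit L) [:: (1, dupd L)].

(* The (evidently computable) reduction algorithm: query the oracle on the
   deterministic loop viewed as a probabilistic loop, and read each formal
   variable E[x_i] as x_i (same index, so the output is returned unchanged). *)
Definition reduction (O : forall k : nat, ProbLoop k -> seq {mpoly algC[k]})
  : forall k : nat, DetLoop k -> seq {mpoly algC[k]} :=
  fun k L => O k (det_as_prob L).

(* Viewed as a probabilistic loop, a deterministic loop has, after n
   iterations, the Dirac distribution at F^n(v); hence E[(x_i)_n] is the
   i-th coordinate of F^n(v), and the moment invariant ideal of order 1 is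
   the classical invariant ideal, with E[x_i] read as x_i. *)
From mathcomp Require Import all_boot all_algebra all_field.
From mathcomp Require Import mpoly.
Import GRing.Theory.
Local Open Scope ring_scope.

Section DetAsProb.

Context {k : nat} (L : DetLoop k).

Lemma prob_valid_det_as_prob : prob_valid (det_as_prob L).
Proof. by split; rewrite //= big_seq1. Qed.

Lemma dist_det_as_prob n : dist (det_as_prob L) n = [:: (1, det_state L n)].
Proof. by elim: n => [//|n IHn]; rewrite /dist iterS -/(dist _ n) IHn. Qed.

Lemma expect_det_as_prob n i : expect (det_as_prob L) n i = det_state L n i.
Proof. by rewrite /expect dist_det_as_prob big_seq1 mul1r. Qed.

Lemma moment_ideal1_det_as_prob p :
  moment_ideal1 (det_as_prob L) p <-> classical_inv_ideal L p.
Proof.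
have eval_expect n : p.@[fun i => ratr (expect (det_as_prob L) n i)]
                     = p.@[fun i => ratr (det_state L n i)].
  by apply: meval_eq => i; rewrite expect_det_as_prob.
by split=> p_inv n; [rewrite -eval_expect | rewrite eval_expect].
Qed.

End DetAsProb.

Theorem theorem5p10 :
  forall O : forall k : nat, ProbLoop k -> seq {mpoly algC[k]},
    solves_ProbSPInv O -> solves_SPInv (reduction O).
Proof.
move=> O solves_O k L p.
rewrite /reduction -(solves_O k _ (prob_valid_det_as_prob L) p).
exact: iff_sym (moment_ideal1_det_as_prob L p).
Qed.
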